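(* Let $f : \widehat{\mathbb{Z}} \to \widehat{\mathbb{Z}}$ be a continuous map, $P$ a period map of $f$, and let $k, m, n \in \mathbb{N}$ satisfy $m = P^k(n) = P^{k+1}(n)$. Let $K$ be the preperiod length and $L$ the period of the reduction $f_m : \mathbb{Z}/m\mathbb{Z} \to \mathbb{Z}/m\mathbb{Z}$. Then for all $s, t \in \widehat{\mathbb{Z}}$ and $u, v \in \mathbb{N}$, if $s \equiv_m t$, $u, v \ge k + K$ and $u \equiv_L v$, then $f^u(s) \equiv_n f^v(t)$.
   Context: $\mathbb{N} = \{1,2,\dots\}$, $\widehat{\mathbb{Z}} = \varprojlim_n \mathbb{Z}/n\mathbb{Z}$; for $s,t \in \widehat{\mathbb{Z}}$, $s \equiv_n t$ means $s - t \in n\widehat{\mathbb{Z}}$; $f^u$ and $P^k$ denote iterates. A map $P:\mathbb{N} \to \mathbb{N}$ is a period map of $f$ if $s \equiv_{P(n)} t$ implies $f(s) \equiv_n f(t)$ for all $s,t,n$; then $f$ induces reductions $f_n : \mathbb{Z}/P(n)\mathbb{Z} \to \mathbb{Z}/n\mathbb{Z}$, and since $P(m) = m$, $f_m$ is a self-map of $\mathbb{Z}/m\mathbb{Z}$. For a self-map $\sigma$ of a finite set $F$ and $y \in F$, the tail length $k_y$ and cycle length $l_y$ are the unique integers $k_y \ge 0$, $l_y \ge 1$ such that for $k' \ge 0, l' \ge 1$: $\sigma^{k'}(y) = \sigma^{k'+l'}(y)$ iff $k_y \le k'$ and $l_y \mid l'$. The preperiod length of $\sigma$ is $\max_y k_y$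 and the period of $\sigma$ is $\operatorname{lcm}_y l_y$. *)

From mathcomp Require Import all_boot.
Set Implicit Arguments. Unset Strict Implicit. Unset Printing Implicit Defensive.

(* Profinite integers Zhat = lim_n Z/nZ, represented as compatible families of
   residues: component n (for n >= 1) lies in [0, n); component 0 is fixed to 0
   (padding, so that nat index 0 carries no information). *)
Record zhat := ZHat {
  zc : nat -> nat;
  zc0 : zc 0 = 0;
  zc_lt : forall n, 0 < n -> zc n < n;
  zc_compat : forall d n, 0 < d -> 0 < n -> d %| n -> zc n %% d = zc d }.

(* s ==_n t : s - t \in n Zhat, i.e. s = t + n*w for some w in Zhat
   (ring operations of Zhat computed componentwise). *)
Definition zcong (n : nat) (s t : zhat) : Prop :=
  exists w : zhat, forall j, 0 < j -> zc s j = (zc t j + n * zc w j) %% j.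

(* continuity for the profinite topology (basic neighbourhoods s + m Zhat) *)
Definition zcontinuous (f : zhat -> zhat) : Prop :=
  forall (s : zhat) (n : nat), 0 < n ->
    exists2 m, 0 < m & forall t, zcong m s t -> zcong n (f s) (f t).

Definition period_map (f : zhat -> zhat) (P : nat -> nat) : Prop :=
  (forall n, 0 < n -> 0 < P n) /\
  (forall (s t : zhat) (n : nat), 0 < n -> zcong (P n) s t -> zcong n (f s) (f t)).

Definition zofnat_c (a : nat) (j : nat) : nat := if j is 0 then 0 else a %% j.

Lemma zofnat_c0 a : zofnat_c a 0 = 0. Proof. by []. Qed.
Lemma zofnat_lt a n : 0 < n -> zofnat_c a n < n.
Proof. by case: n => // n _; rewrite /zofnat_c ltn_pmod. Qed.
Lemma zofnat_compat a d n : 0 < d -> 0 < n -> d %| n ->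
  zofnat_c a n %% d = zofnat_c a d.
Proof. by case: d => // d; case: n => // n _ _ /= H; rewrite modn_dvdm. Qed.

Definition zofnat (a : nat) : zhat :=
  ZHat (zofnat_c0 a) (@zofnat_lt a) (@zofnat_compat a).

Lemma ord_pos m (x : 'I_m) : 0 < m.
Proof. exact: leq_ltn_trans (leq0n x) (ltn_ord x). Qed.

(* reduction f_m : Z/mZ -> Z/mZ (meaningful when P m = m):
   lift x to Zhat, apply f, reduce mod m *)
Definition red (f : zhat -> zhat) (m : nat) (x : 'I_m) : 'I_m :=
  Ordinal (zc_lt (f (zofnat x)) (ord_pos x)).

Definition tail_cycle (T : finType) (sigma : T -> T) (y : T) (k l : nat) : Prop :=
  0 < l /\
  forall k' l', 0 < l' ->
    (iter k' sigma y = iter (k' + l') sigma y <-> (k <= k' /\ l %| l')).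

(* Since P m = m, the map f respects congruence mod m, so on residues mod m
   the iterates of f are the iterates of the reduction f_m.  Beyond the
   preperiod K, an iterate of f_m only depends on the exponent modulo L; hence
   f^(u-k) s and f^(v-k) t agree mod m = P^k(n), and k more applications of f
   turn this into a congruence mod n. *)

From mathcomp Require Import all_boot zify.

Set Implicit Arguments.
Unset Strict Implicit.
Unset Printing Implicit Defensive.

Lemma modn_addBn x y j d : 0 < d -> y <= j -> d %| j ->
  (x + j - y) %% d = (x %% d + d - y %% d) %% d.
Proof.
move=> d_gt0 le_yj dv_dj; apply/eqP; rewrite -(eqn_modDr y).
rewrite subnK; last exact: leq_trans le_yj (leq_addl x j).
rewrite -[in X in _ == X]modnDmr subnK; last first.
  exact: leq_trans (ltnW (ltn_pmod y d_gt0)) (leq_addl _ _).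
by rewrite modnDr -modnDmr (eqP dv_dj) addn0 modn_mod.
Qed.

Section ZhatSub.
Variables a b : zhat.

Definition zsub_c (j : nat) : nat := (zc a j + j - zc b j) %% j.

Lemma zsub_c0 : zsub_c 0 = 0.
Proof. by rewrite /zsub_c !zc0. Qed.

Lemma zsub_lt j : 0 < j -> zsub_c j < j.
Proof. exact: ltn_pmod. Qed.

Lemma zsub_compat d j : 0 < d -> 0 < j -> d %| j -> zsub_c j %% d = zsub_c d.
Proof.
move=> d_gt0 j_gt0 dv_dj.
rewrite /zsub_c modn_dvdm // modn_addBn ?(ltnW (zc_lt _ j_gt0)) //.
by rewrite !zc_compat.
Qed.

Definition zsub : zhat := ZHat zsub_c0 zsub_lt zsub_compat.

End ZhatSub.

Section ZhatDivm.
Variables (m : nat) (m_gt0 : 0 < m) (c : zhat).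

(* The element (c - c_m) / m of Zhat, c_m the residue of c mod m. *)
Definition zdivm_c (j : nat) : nat := zc c (j * m) %/ m.

Lemma zdivm_c0 : zdivm_c 0 = 0.
Proof. by rewrite /zdivm_c mul0n zc0 div0n. Qed.

Lemma zdivm_lt j : 0 < j -> zdivm_c j < j.
Proof. by move=> j_gt0; rewrite ltn_divLR // zc_lt // muln_gt0 j_gt0. Qed.

Lemma zdivm_compat d j : 0 < d -> 0 < j -> d %| j -> zdivm_c j %% d = zdivm_c d.
Proof.
move=> d_gt0 j_gt0 dv_dj.
by rewrite /zdivm_c modn_divl zc_compat ?muln_gt0 ?d_gt0 ?j_gt0 ?dvdn_pmul2r.
Qed.

Definition zdivm : zhat := ZHat zdivm_c0 zdivm_lt zdivm_compat.

End ZhatDivm.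

Lemma zcongP m (a b : zhat) : 0 < m -> zcong m a b <-> zc a m = zc b m.
Proof.
move=> m_gt0; split=> [[w /(_ m m_gt0) ->]|eq_ab].
  by rewrite -modnDmr modnMr addn0 modn_small // zc_lt.
(* The witness is (a - b) / m = (a - a_m) / m - (b - b_m) / m. *)
exists (zsub (zdivm m_gt0 a) (zdivm m_gt0 b)) => j j_gt0 /=.
rewrite /zsub_c /zdivm_c.
set A := zc a (j * m); set B := zc b (j * m).
have jm_gt0 : 0 < j * m by rewrite muln_gt0 j_gt0.
have [Aj Bj] : zc a j = A %% j /\ zc b j = B %% j.
  by rewrite !zc_compat ?dvdn_mulr.
have AB_mod_m : A %% m = B %% m by rewrite !zc_compat ?dvdn_mull.
have lt_Bj : B %/ m < j by rewrite ltn_divLR // zc_lt.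
rewrite Aj Bj modnDml -modnDmr modnMmr modnDmr.
have -> : B + m * (A %/ m + j - B %/ m) = m * j + A.
  by rewrite {2}(divn_eq A m) {1}(divn_eq B m) AB_mod_m; nia.
by rewrite modnMDl.
Qed.

Lemma zcong_iter_period_map f P j n (a b : zhat) : period_map f P -> 0 < n ->
  zcong (iter j P n) a b -> zcong n (iter j f a) (iter j f b).
Proof.
move=> [P_gt0 fP]; elim: j n a b => [|j IHj] n a b n_gt0 //.
rewrite iterSr !iterS => ab; apply: fP => //.
exact: IHj (P_gt0 n n_gt0) ab.
Qed.

Lemma zc_zofnat x n : x < n -> zc (zofnat x) n = x.
Proof. by case: n => // n; exact: modn_small. Qed.

Section Reduction.
Variables (f : zhat -> zhat) (P : nat -> nat) (m : nat).
Hypotheses (fP : period_map f P) (Pm : P m = m) (m_gt0 : 0 < m).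

Definition zres (a : zhat) : 'I_m := Ordinal (zc_lt a m_gt0).

Lemma red_zres a : red f (zres a) = zres (f a).
Proof.
apply: val_inj; apply/zcongP => //; apply: fP.2 => //; rewrite Pm.
by apply/zcongP => //; rewrite zc_zofnat ?zc_lt.
Qed.

Lemma iter_red_zres j a : iter j (red f (m:=m)) (zres a) = zres (iter j f a).
Proof. by elim: j => //= j ->; rewrite red_zres. Qed.

End Reduction.

Lemma tail_cycle_iter_eq_mod (T : finType) (g : T -> T) y k l K L p q :
  tail_cycle g y k l -> k <= K -> l %| L ->
  K <= p -> K <= q -> p = q %[mod L] -> iter p g y = iter q g y.
Proof.
move=> [_ tc] le_kK dv_lL.
wlog le_pq : p q / p <= q => [hwlog Kp Kq pq|Kp _ pq].
  by case: (leqP p q) => [|/ltnW] le; [|symmetry]; apply: hwlog.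
rewrite -(subnKC le_pq); case E: (q - p) => [|d]; first by rewrite addn0.
apply/(tc p d.+1) => //; split; first exact: leq_trans Kp.
by apply: dvdn_trans dv_lL _; rewrite -E -eqn_mod_dvd // pq.
Qed.

Theorem lemma3p6 (f : zhat -> zhat) (P : nat -> nat) (k m n : nat)
  (kk ll : 'I_m -> nat) (K L : nat) :
  zcontinuous f ->
  period_map f P ->
  0 < k -> 0 < m -> 0 < n ->
  m = iter k P n -> m = iter k.+1 P n ->
  (forall y : 'I_m, tail_cycle (red f (m:=m)) y (kk y) (ll y)) ->
  K = \max_(y : 'I_m) kk y ->
  L = \big[lcmn/1]_(y : 'I_m) ll y ->
  forall (s t : zhat) (u v : nat),
    0 < u -> 0 < v ->
    zcong m s t -> k + K <= u -> k + K <= v -> u = v %[mod L] ->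
    zcong n (iter u f s) (iter v f t).
Proof.
move=> _ fP _ m_gt0 n_gt0 Em Em1 tcP EK EL s t u v _ _ st ku kv uv.
have Pm : P m = m by rewrite {2}Em1 iterS -Em.
have [le_ku le_kv] : k <= u /\ k <= v.
  by split; [apply: leq_trans ku | apply: leq_trans kv]; apply: leq_addr.
rewrite -(subnKC le_ku) -(subnKC le_kv) !iterD.
apply: (zcong_iter_period_map fP n_gt0); rewrite -Em; apply/zcongP => //.
suff : zres m_gt0 (iter (u - k) f s) = zres m_gt0 (iter (v - k) f t).
  by move/(congr1 val).
rewrite -!(iter_red_zres fP Pm).
have -> : zres m_gt0 t = zres m_gt0 s by apply/val_inj/esym/zcongP.
apply: (tail_cycle_iter_eq_mod (K := K) (L := L) (tcP _)).
- by rewrite EK leq_bigmax.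
- by rewrite EL; apply: (biglcmn_sup (zres m_gt0 s)).
- by rewrite leq_subRL.
- by rewrite leq_subRL.
- by apply/eqP; rewrite -(eqn_modDl k) !subnKC //; apply/eqP.
Qed.
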